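(* In the setting below (with $\eta = \tfrac1{40}$), let $A=\langle l_A,r_A\rangle$ be a special interval and let $B=\langle l_B,r_B\rangle$ be a near minimum interval such that $A$ and $B$ cross (as sets of outside atoms). Then: (1) at least one of $A\cap B$ and $A\setminus B$ is a special interval; (2) at least one of $A\cup B$ and $B\setminus A$ is a special interval.
   Context: Let $G=(V,E)$ be a multigraph with minimum cut value $k$; $\delta(S)$ is the set of edges with exactly one endpoint in $S$. For $\eta>0$, a cut $\emptyset\ne S\subsetneq V$ is an $\eta$-near minimum cut ($\eta$-NMC) if $|\delta(S)|<(1+\eta)k$ (a cut is identified with either shore). Cuts $S,T$ cross if $S\cap T,S\setminus T,T\setminus S,V\setminus(S\cup T)$ are all nonempty. A connected component $\mathcal{C}$ of $\eta$-NMCs is a connected component of the graph on $\eta$-NMCs in which crossing cuts are adjacent; its atoms $\mathcal{A}(\mathcal{C})$ form the coarsest partition of $V$ such that each cut of $\mathcal{C}$ is a union of atoms. Fix $\eta=\tfrac1{40}$ and a connected component $\mathcal{C}$ with $|\mathcal{C}|>1$, together with a polygon representation of $\mathcal{C}$ (Benczúr–Goemans): a convex regular polygon with vertices $p_0,\dots,p_{n-1}$ and a set of straight-line diagonals partitioning it into cells; each atom is mapped to a cell; atoms in cells bounded by part of the polygon boundary are outside atoms, the other atoms are inside atoms; no cell has more than one incident polygon side; each diagonal defines a cut whose two sides are the unions of atoms on the two sides of the diagonal, and the cuts so defined are exactly $\mathcal{C}$. The outside atoms are $a_0,\dots,a_{n-1}$ in counterclockwise order, $a_i$ lying on the side $(p_i,p_{i+1})$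 (indices mod $n$, $a_n=a_0$). For $S\subseteq V$, $O(S)$ is the set of outside atoms contained in $S$. For $1\le l<r\le n$, the interval $\langle l,r\rangle$ is the set $\{a_l,a_{l+1},\dots,a_{r-1}\}$. The interval $\langle l,r\rangle$ is a shadow if there is a $\tfrac15$-NMC $S$ that is a union of atoms of $\mathcal{C}$ with $O(S)=\langle l,r\rangle$; such an $S$ is known to be unique, and is called the canonical cut $\langle\langle l,r\rangle\rangle$. It is also known that two canonical cuts cross iff their intervals cross (as subsets of $\{a_0,\dots,a_{n-1}\}$). A shadow $\langle l,r\rangle$ is a near minimum interval (NMI) if $\langle\langle l,r\rangle\rangle$ is an $\eta$-NMC. A canonical cut $S$ is special if either (i) $S$ is an $\eta$-NMC, or (ii) there are two crossing canonical cuts $A',B'$, both $\eta$-NMCs, such that $S$ equals $A'\cap B'$, $A'\cup B'$, $A'\setminus B'$ or $B'\setminus A'$. An interval $\langle l,r\rangle$ is special if it is a shadow and $\langle\langle l,r\rangle\rangle$ is special. *)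

From Stdlib Require Import Reals.
From mathcomp Require Import all_boot.

Set Implicit Arguments.
Unset Strict Implicit.
Unset Printing Implicit Defensive.

(* A multigraph on the finite vertex type V is given by a symmetric    *)
(* multiplicity function w : V -> V -> nat (w u v = number of edges    *)
(* between u and v; loops never contribute to a cut).                   *)

Definition cutval (V : finType) (w : V -> V -> nat) (S : {set V}) : nat :=
  \sum_(u in S) \sum_(v in ~: S) w u v.

Definition proper_cut (V : finType) (S : {set V}) : bool :=
  (S != set0) && (S != setT).

Definition is_min_cut_value (V : finType) (w : V -> V -> nat) (k : nat) : Prop :=
  (forall S : {set V}, proper_cut S -> k <= cutval w S) /\
  (exists S : {set V}, proper_cut S /\ cutval w S = k).

(* S is an eta-near minimum cut, with eta = p/q (q > 0):
   |delta(S)| < (1 + p/q) k  <->  q |delta(S)| < (q + p) k *)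
Definition nmc (V : finType) (w : V -> V -> nat) (k p q : nat) (S : {set V}) : bool :=
  proper_cut S && (q * cutval w S < (q + p) * k).

Definition crosses (T : finType) (S U : {set T}) : bool :=
  [&& S :&: U != set0, S :\: U != set0, U :\: S != set0 & ~: (S :|: U) != set0].

Definition crossrel (V : finType) (w : V -> V -> nat) (k p q : nat) : rel {set V} :=
  fun S T => [&& nmc w k p q S, nmc w k p q T & crosses S T].

(* C (a set of shores, closed under complementation, i.e. each cut is
   represented by both of its shores) is a connected component of the
   graph on eta-NMCs in which crossing cuts are adjacent. *)
Definition is_nmc_component (V : finType) (w : V -> V -> nat) (k p q : nat)
    (C : {set {set V}}) : Prop :=
  exists2 S0 : {set V}, nmc w k p q S0 &
    C = [set T | nmc w k p q T &&
                 (connect (crossrel w k p q) S0 T ||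
                  connect (crossrel w k p q) S0 (~: T))].

Definition more_than_one_cut (V : finType) (C : {set {set V}}) : Prop :=
  exists S T : {set V}, [/\ S \in C, T \in C, T <> S & T <> ~: S].

Definition atom_of (V : finType) (C : {set {set V}}) (v : V) : {set V} :=
  [set u | [forall S in C, (u \in S) == (v \in S)]].

Definition atoms (V : finType) (C : {set {set V}}) : {set {set V}} :=
  [set atom_of C v | v : V].

Definition union_of_atoms (V : finType) (C : {set {set V}}) (S : {set V}) : bool :=
  [forall X in atoms C, (X \subset S) || [disjoint X & S]].

Definition vx (n j : nat) : R := cos (Rdiv (Rmult (Rmult 2 PI) (INR j)) (INR n)).
Definition vy (n j : nat) : R := sin (Rdiv (Rmult (Rmult 2 PI) (INR j)) (INR n)).

(* Orientation (cross product) of the point q w.r.t. the directed line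
   p_s -> p_t: positive = to the left, negative = to the right. *)
Definition orient (n s t : nat) (q : R * R) : R :=
  Rminus (Rmult (Rminus (vx n t) (vx n s)) (Rminus (snd q) (vy n s)))
         (Rmult (Rminus (vy n t) (vy n s)) (Rminus (fst q) (vx n s))).

Definition inside_polygon (n : nat) (q : R * R) : Prop :=
  forall i : 'I_n, Rlt 0 (orient n i i.+1 q).

Definition rltb (x y : R) : bool := if Rlt_dec x y then true else false.

(* For a diagonal d = (p_s, p_t) with s < t, the side of d containing the
   polygon sides (p_s,p_{s+1}), ..., (p_{t-1},p_t) is the region strictly
   to the right of the directed chord p_s -> p_t. *)
Definition on_low_side (n : nat) (d : 'I_n * 'I_n) (q : R * R) : bool :=
  rltb (orient n d.1 d.2 q) R0.

Definition diag_cut (V : finType) (C : {set {set V}}) (n : nat)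
    (pos : {set V} -> R * R) (d : 'I_n * 'I_n) : {set V} :=
  \bigcup_(X in atoms C | @on_low_side n d (pos X)) X.

(* The point q lies in the cell incident to the polygon side
   (p_i, p_{i+1}): it is on the same side as that polygon side of every
   diagonal. *)
Definition in_side_cell (n : nat) (D : {set 'I_n * 'I_n}) (q : R * R) (i : 'I_n) : Prop :=
  forall d, d \in D -> (@on_low_side n d q <-> (d.1 <= i < d.2)).

(* Polygon representation of C: n polygon vertices, a set D of diagonals
   (pairs s < t of non-adjacent polygon vertices), an assignment pos of a
   point (in the interior of its cell) to every atom, and the outside
   atoms a_0, ..., a_{n-1}, a_i lying on the side (p_i, p_{i+1}). *)
Definition polygon_rep (V : finType) (C : {set {set V}}) (n : nat)
    (D : {set 'I_n * 'I_n}) (pos : {set V} -> R * R) (a : 'I_n -> {set V}) : Prop :=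
  [/\ 3 <= n,
      (* genuine straight-line diagonals (not sides) *)
      (forall d, d \in D ->
         [/\ d.1 < d.2, d.1.+1 < d.2 & ~~ ((d.1 == 0 :> nat) && (d.2 == n.-1 :> nat))]),
      (* each atom is mapped to a cell: a point of the open polygon lying on
         no diagonal *)
      (forall X, X \in atoms C ->
         inside_polygon n (pos X) /\
         (forall d, d \in D -> orient n d.1 d.2 (pos X) <> R0)),
      (* the outside atoms are exactly a_0, ..., a_{n-1}, a_i being the atom
         in the cell incident to the side (p_i, p_{i+1}); all other atoms are
         inside atoms *)
      (forall i, a i \in atoms C) /\
      (forall X i, X \in atoms C -> (@in_side_cell n D (pos X) i <-> X = a i)) /\
      (* no cell has more than one incident polygon side *)
      (forall i j : 'I_n, i != j ->
         exists2 d, d \in D & (d.1 <= i < d.2) != (d.1 <= j < d.2))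
    &
      (forall T : {set V}, T \in C <->
         exists2 d, d \in D & T = diag_cut C pos d \/ T = ~: diag_cut C pos d)].

(* intervals.  Outside atoms are referred to by their index in 'I_n.   *)

Definition outside_in (V : finType) (n : nat) (a : 'I_n -> {set V}) (S : {set V}) : {set 'I_n} :=
  [set i : 'I_n | a i \subset S].

Definition interval (n l r : nat) : {set 'I_n} := [set i : 'I_n | l <= i < r].

Definition valid_lr (n l r : nat) : bool := (1 <= l) && (l < r) && (r <= n).

Definition canonical_for (V : finType) (w : V -> V -> nat) (k : nat)
    (C : {set {set V}}) (n : nat) (a : 'I_n -> {set V}) (S : {set V}) (l r : nat) : Prop :=
  [/\ nmc w k 1 5 S, union_of_atoms C S & outside_in a S = interval n l r].

Definition shadow V w k C n a (l r : nat) : Prop :=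
  valid_lr n l r /\ exists S : {set V}, @canonical_for V w k C n a S l r.

Definition is_canonical V w k C n a (S : {set V}) : Prop :=
  exists l r, valid_lr n l r /\ @canonical_for V w k C n a S l r.

Definition special_cut V w k C n a (S : {set V}) : Prop :=
  nmc w k 1 40 S \/
  exists A' B' : {set V},
    [/\ @is_canonical V w k C n a A', @is_canonical V w k C n a B',
        nmc w k 1 40 A' && nmc w k 1 40 B', crosses A' B' &
        (S = A' :&: B' \/ S = A' :|: B' \/ S = A' :\: B' \/ S = B' :\: A')].

(* <l, r> is special: it is a shadow and its canonical cut <<l, r>> is
   special (the canonical cut is unique; we quantify existentially). *)
Definition special_interval V w k C n a (l r : nat) : Prop :=
  valid_lr n l r /\
  exists S : {set V}, @canonical_for V w k C n a S l r /\ @special_cut V w k C n a S.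

Definition NMI V w k C n a (l r : nat) : Prop :=
  valid_lr n l r /\
  exists S : {set V}, @canonical_for V w k C n a S l r /\ nmc w k 1 40 S.

Definition special_iset V w k C n a (I : {set 'I_n}) : Prop :=
  exists l r, I = interval n l r /\ @special_interval V w k C n a l r.

From Stdlib Require Import Reals.
From mathcomp Require Import all_boot.
From mathcomp Require Import zify.

Set Implicit Arguments.
Unset Strict Implicit.
Unset Printing Implicit Defensive.

(* Submodularity and posimodularity of the cut function make the four
   combinations of two crossing 1/40-near minimum cuts 1/20-near minimum; for
   canonical X, Y they are therefore special, and their outside atoms form the
   corresponding combination of the intervals of X and Y.  The canonical cut of A
   is a canonical 1/40-near minimum cut or such a combination of two crossing
   ones, and <<B>> is one.  Comparing endpoints, in every configuration some
   canonical 1/40-near minimum cut L among these crosses <<B>>, and each required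
   interval is O(L) or the outside part of a combination of L and <<B>>.  Since
   a_0 lies in no interval, crossing is read off the intervals, except when the
   interval of L is nested in B: then either L is not contained in <<B>> and
   crosses it, or L is contained in <<B>> and the partner of L, which crosses L,
   crosses <<B>>. *)

Section CrossingSets.
Variable T : finType.

Lemma proper_cut_witness (S : {set T}) x y : x \in S -> y \notin S -> proper_cut S.
Proof.
move=> xS yS; rewrite /proper_cut; apply/andP; split; apply/eqP => S0.
  by rewrite S0 inE in xS.
by rewrite S0 inE in yS.
Qed.

Lemma crossesC (X Y : {set T}) : crosses X Y = crosses Y X.
Proof.
rewrite /crosses setIC setUC.
by case: (Y :&: X != set0); case: (X :\: Y != set0); case: (Y :\: X != set0).
Qed.

Lemma crosses_proper (X Y : {set T}) : crosses X Y ->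
  [/\ proper_cut (X :&: Y), proper_cut (X :|: Y), proper_cut (X :\: Y)
    & proper_cut (Y :\: X)].
Proof.
case/and4P=> /set0Pn[x1 +] /set0Pn[x2 +] /set0Pn[x3 +] /set0Pn[x4 +]; rewrite !inE.
move=> /andP[x1X x1Y] /andP[x2Y x2X] /andP[x3X x3Y] /norP[x4X x4Y].
split.
- by apply: (proper_cut_witness (x := x1) (y := x2)); rewrite !inE ?x1X ?x1Y ?x2X.
- by apply: (proper_cut_witness (x := x1) (y := x4)); rewrite !inE ?x1X ?negb_or ?x4X.
- by apply: (proper_cut_witness (x := x2) (y := x1)); rewrite !inE ?x2X ?x2Y ?x1Y.
- by apply: (proper_cut_witness (x := x3) (y := x1)); rewrite !inE ?x3X ?x3Y ?x1X.
Qed.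

Lemma crosses_sub (X Y Z : {set T}) :
  crosses X Y -> Y \subset Z -> (X :&: Z != set0) && (Z :\: X != set0).
Proof.
case/and4P=> meetXY _ diffYX _ sYZ; apply/andP; split.
  apply: contraNneq meetXY => XZ0; rewrite -subset0 -XZ0; exact: setIS.
apply: contraNneq diffYX => ZX0; rewrite -subset0 -ZX0; exact: setSD.
Qed.

End CrossingSets.

Section CutFunction.
Variables (V : finType) (w : V -> V -> nat).

Lemma cutvalE (S : {set V}) :
  cutval w S = \sum_u \sum_v (((u \in S) && (v \notin S)) * w u v).
Proof.
rewrite /cutval big_mkcond /=; apply: eq_bigr => u _.
case: (u \in S) => /=; last by rewrite big1 // => v _; rewrite mul0n.
rewrite big_mkcond /=; apply: eq_bigr => v _; rewrite inE.
by case: (v \in S); rewrite ?mul1n ?mul0n.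
Qed.

Lemma cutval_submod (X Y : {set V}) :
  cutval w (X :&: Y) + cutval w (X :|: Y) <= cutval w X + cutval w Y.
Proof.
rewrite !cutvalE -!big_split /=; apply: leq_sum => u _.
rewrite -!big_split /=; apply: leq_sum => v _; rewrite !inE.
by case: (u \in X); case: (u \in Y); case: (v \in X); case: (v \in Y);
  rewrite /= ?mul0n ?mul1n ?addn0 ?add0n //; lia.
Qed.

Hypothesis w_sym : forall u v, w u v = w v u.

Lemma cutvalC (S : {set V}) : cutval w (~: S) = cutval w S.
Proof.
rewrite !cutvalE exchange_big /=; apply: eq_bigr => u _; apply: eq_bigr => v _.
by rewrite !inE negbK andbC w_sym.
Qed.

Lemma cutval_posimod (X Y : {set V}) :
  cutval w (X :\: Y) + cutval w (Y :\: X) <= cutval w X + cutval w Y.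
Proof.
have := cutval_submod X (~: Y); rewrite cutvalC.
have -> : X :&: ~: Y = X :\: Y by apply/setP => x; rewrite !inE andbC.
have -> : X :|: ~: Y = ~: (Y :\: X).
  by apply/setP => x; rewrite !inE; case: (x \in X); case: (x \in Y).
by rewrite cutvalC.
Qed.

Variable k : nat.
Hypothesis cut_ge_k : forall S, proper_cut S -> k <= cutval w S.

Lemma nmc_meet p q (X Y : {set V}) : crosses X Y ->
  nmc w k p q X -> nmc w k p q Y -> nmc w k (2 * p) q (X :&: Y).
Proof.
move=> crXY /andP[_ hX] /andP[_ hY]; have [pI pU _ _] := crosses_proper crXY.
rewrite /nmc pI /=; have := leq_mul (leqnn q) (cutval_submod X Y).
have := leq_mul (leqnn q) (cut_ge_k pU); rewrite !mulnDr; lia.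
Qed.

Lemma nmc_join p q (X Y : {set V}) : crosses X Y ->
  nmc w k p q X -> nmc w k p q Y -> nmc w k (2 * p) q (X :|: Y).
Proof.
move=> crXY /andP[_ hX] /andP[_ hY]; have [pI pU _ _] := crosses_proper crXY.
rewrite /nmc pU /=; have := leq_mul (leqnn q) (cutval_submod X Y).
have := leq_mul (leqnn q) (cut_ge_k pI); rewrite !mulnDr; lia.
Qed.

Lemma nmc_diff p q (X Y : {set V}) : crosses X Y ->
  nmc w k p q X -> nmc w k p q Y -> nmc w k (2 * p) q (X :\: Y).
Proof.
move=> crXY /andP[_ hX] /andP[_ hY]; have [_ _ pD pD'] := crosses_proper crXY.
rewrite /nmc pD /=; have := leq_mul (leqnn q) (cutval_posimod X Y).
have := leq_mul (leqnn q) (cut_ge_k pD'); rewrite !mulnDr; lia.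
Qed.

End CutFunction.

Lemma nmc_weaken (V : finType) (w : V -> V -> nat) k p q p' q' (S : {set V}) :
  0 < q -> 0 < q' -> p * q' <= p' * q -> nmc w k p q S -> nmc w k p' q' S.
Proof.
rewrite /nmc => q_gt0 q'_gt0 pq /andP[-> hS] /=.
rewrite -(ltn_pmul2l q_gt0).
have := leq_mul (leqnn q') hS; have := leq_mul pq (leqnn k); lia.
Qed.

Section Atoms.
Variables (V : finType) (C : {set {set V}}).

Lemma atom_neq0 (X : {set V}) : X \in atoms C -> X != set0.
Proof.
case/imsetP=> v _ ->; apply/set0Pn; exists v; rewrite inE.
by apply/forallP => S; apply/implyP.
Qed.

Lemma union_of_atomsP (S : {set V}) : union_of_atoms C S <->
  forall X, X \in atoms C -> forall x y, x \in X -> y \in X -> (x \in S) = (y \in S).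
Proof.
split=> [/forallP uS X XC x y xX yX | uS].
  move: (uS X); rewrite XC => /orP[/subsetP sub | dis].
    by rewrite (sub x xX) (sub y yX).
  by rewrite (disjointFr dis xX) (disjointFr dis yX).
apply/forallP => X; apply/implyP => XC; have /set0Pn[x xX] := atom_neq0 XC.
case xS: (x \in S); apply/orP; [left | right].
  by apply/subsetP => y yX; rewrite -(uS X XC x y xX yX).
by rewrite disjoint_subset; apply/subsetP => y yX; rewrite inE -(uS X XC x y xX yX) xS.
Qed.

Lemma union_of_atoms_pointwise (f : bool -> bool -> bool) (X Y S : {set V}) :
  (forall x, (x \in S) = f (x \in X) (x \in Y)) ->
  union_of_atoms C X -> union_of_atoms C Y -> union_of_atoms C S.
Proof.
move=> memS /union_of_atomsP uX /union_of_atomsP uY; apply/union_of_atomsP.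
by move=> Z ZC x y xZ yZ; rewrite !memS (uX Z ZC x y xZ yZ) (uY Z ZC x y xZ yZ).
Qed.

Variables (n : nat) (a : 'I_n -> {set V}).
Hypothesis a_atom : forall i, a i \in atoms C.

Lemma outside_atom_witness (i : 'I_n) : exists x, x \in a i.
Proof. by apply/set0Pn; apply: atom_neq0. Qed.

Lemma mem_outside_in (S : {set V}) (i : 'I_n) x :
  union_of_atoms C S -> x \in a i -> (i \in outside_in a S) = (x \in S).
Proof.
move=> /forallP/(_ (a i)); rewrite a_atom inE => /orP[sub | dis] xi.
  by rewrite sub (subsetP sub x xi).
rewrite (disjointFr dis xi); apply/negbTE/negP => /subsetP/(_ x xi).
by rewrite (disjointFr dis xi).
Qed.

End Atoms.

Lemma crossing_intervals n lA rA lB rB :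
  valid_lr n lA rA -> valid_lr n lB rB -> crosses (interval n lA rA) (interval n lB rB) ->
  [&& 0 < lA, lA < lB, lB < rA, rA < rB & rB <= n] ||
  [&& 0 < lB, lB < lA, lA < rB, rB < rA & rA <= n].
Proof.
rewrite /valid_lr => vA vB.
by case/and4P=> /set0Pn[i +] /set0Pn[j +] /set0Pn[m +] _; rewrite !inE; lia.
Qed.

Ltac interval_lia := rewrite ?/valid_lr; try move=> ?; lia.

Section Setting.
Variables (V : finType) (w : V -> V -> nat) (k : nat) (C : {set {set V}})
  (n : nat) (a : 'I_n -> {set V}).
Hypothesis w_sym : forall u v, w u v = w v u.
Hypothesis cut_ge_k : forall S, proper_cut S -> k <= cutval w S.
Hypothesis a_atom : forall i, a i \in atoms C.
Hypothesis n_gt0 : 0 < n.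

Local Notation special := (special_interval w k C a).

Definition nmi_cut (X : {set V}) (l r : nat) : Prop :=
  [/\ valid_lr n l r, canonical_for w k C a X l r & nmc w k 1 40 X].

Lemma nmi_cut_bounds X l r : nmi_cut X l r -> [&& 0 < l, l < r & r <= n].
Proof. by case; rewrite /valid_lr => /andP[/andP[-> ->] ->]. Qed.

Lemma nmi_cut_atoms X l r : nmi_cut X l r -> union_of_atoms C X.
Proof. by case=> _ []. Qed.

Lemma mem_nmi_cut X l r (i : 'I_n) x :
  nmi_cut X l r -> x \in a i -> (x \in X) = (l <= i < r).
Proof. by case=> _ [_ uX OX] _ xi; rewrite -(mem_outside_in a_atom uX xi) OX inE. Qed.

Lemma nmi_cut_witness m : m < n ->
  exists x, forall X l r, nmi_cut X l r -> (x \in X) = (l <= m < r).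
Proof.
move=> mn; have [x xm] := outside_atom_witness a_atom (Ordinal mn).
by exists x => X l r NX; rewrite (mem_nmi_cut NX xm).
Qed.

Section TwoCuts.
Variables (X Y : {set V}) (a1 a2 b1 b2 : nat).
Hypotheses (NX : nmi_cut X a1 a2) (NY : nmi_cut Y b1 b2).

Lemma nmi_cut_meet_neq0 : a1 < b2 -> b1 < a2 -> X :&: Y != set0.
Proof.
move=> a1_lt b1_lt; have := nmi_cut_bounds NX; have := nmi_cut_bounds NY => bY bX.
have [|x memx] := @nmi_cut_witness (maxn a1 b1); first lia.
by apply/set0Pn; exists x; rewrite inE (memx _ _ _ NX) (memx _ _ _ NY); lia.
Qed.

Lemma nmi_cut_diff_neq0 : (a1 < b1) || (b2 < a2) -> X :\: Y != set0.
Proof.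
move=> out; have := nmi_cut_bounds NX; have := nmi_cut_bounds NY => bY bX.
have [|x memx] := @nmi_cut_witness (if a1 < b1 then a1 else maxn a1 b2).
  by case: (ltnP a1 b1) => /=; lia.
apply/set0Pn; exists x; rewrite inE (memx _ _ _ NX) (memx _ _ _ NY).
by case: (ltnP a1 b1) => /=; lia.
Qed.

(* The outside atom a_0 lies in no interval, hence outside every canonical cut. *)
Lemma nmi_cut_compl_neq0 : ~: (X :|: Y) != set0.
Proof.
have := nmi_cut_bounds NX; have := nmi_cut_bounds NY => bY bX.
have [x memx] := nmi_cut_witness n_gt0.
by apply/set0Pn; exists x; rewrite !inE (memx _ _ _ NX) (memx _ _ _ NY); lia.
Qed.

Lemma nmi_cut_crosses_of :
  X :&: Y != set0 -> X :\: Y != set0 -> Y :\: X != set0 -> crosses X Y.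
Proof. by move=> *; apply/and4P; split=> //; apply: nmi_cut_compl_neq0. Qed.

End TwoCuts.

Lemma nmi_cut_crosses X Y a1 a2 b1 b2 : nmi_cut X a1 a2 -> nmi_cut Y b1 b2 ->
  a1 < b2 -> b1 < a2 -> (a1 < b1) || (b2 < a2) -> (b1 < a1) || (a2 < b2) -> crosses X Y.
Proof.
move=> NX NY h1 h2 h3 h4; apply: (nmi_cut_crosses_of NX NY).
- exact: nmi_cut_meet_neq0 NX NY h1 h2.
- exact: nmi_cut_diff_neq0 NX NY h3.
- exact: nmi_cut_diff_neq0 NY NX h4.
Qed.

Lemma nmi_cut_crosses_nested X Y a1 a2 b1 b2 : nmi_cut X a1 a2 -> nmi_cut Y b1 b2 ->
  a1 <= b1 -> b2 <= a2 -> (a1 < b1) || (b2 < a2) -> ~~ (Y \subset X) -> crosses X Y.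
Proof.
move=> NX NY h1 h2 h3 nsub; have := nmi_cut_bounds NY => bY.
apply: (nmi_cut_crosses_of NX NY); last by rewrite setD_eq0.
- by apply: (nmi_cut_meet_neq0 NX NY); lia.
- exact: (nmi_cut_diff_neq0 NX NY).
Qed.

Lemma nmi_cut_crosses_through X Y Z a1 a2 c1 c2 : nmi_cut X a1 a2 -> nmi_cut Z c1 c2 ->
  crosses X Y -> Y \subset Z -> (a1 < c1) || (c2 < a2) -> crosses X Z.
Proof.
move=> NX NZ crXY sYZ out; have /andP[meetXZ diffZX] := crosses_sub crXY sYZ.
by apply: (nmi_cut_crosses_of NX NZ) => //; apply: (nmi_cut_diff_neq0 NX NZ).
Qed.

Lemma outside_in_pointwise (f : bool -> bool -> bool) (X Y S : {set V}) a1 a2 b1 b2 l r :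
  nmi_cut X a1 a2 -> nmi_cut Y b1 b2 ->
  (forall x, (x \in S) = f (x \in X) (x \in Y)) -> outside_in a S = interval n l r ->
  forall m, m < n -> f (a1 <= m < a2) (b1 <= m < b2) = (l <= m < r).
Proof.
move=> NX NY memS OS m mn; have [x xm] := outside_atom_witness a_atom (Ordinal mn).
have uS := union_of_atoms_pointwise memS (nmi_cut_atoms NX) (nmi_cut_atoms NY).
have := mem_outside_in a_atom uS xm.
by rewrite OS inE memS (mem_nmi_cut NX xm) (mem_nmi_cut NY xm) /= => ->.
Qed.

Lemma special_interval_nmi X l r : nmi_cut X l r -> special l r.
Proof. by case=> vX canX nmcX; split=> //; exists X; split=> //; left. Qed.

Lemma special_interval_combination (f : bool -> bool -> bool) (X Y S : {set V})
    a1 a2 b1 b2 l r :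
  nmi_cut X a1 a2 -> nmi_cut Y b1 b2 -> crosses X Y ->
  S = X :&: Y \/ S = X :|: Y \/ S = X :\: Y \/ S = Y :\: X ->
  (forall x, (x \in S) = f (x \in X) (x \in Y)) ->
  valid_lr n l r -> (forall i, (l <= i < r) = f (a1 <= i < a2) (b1 <= i < b2)) ->
  special l r.
Proof.
move=> NX NY crXY combS memS vS memI; split=> //; exists S.
have [[vX canX nmcX] [vY canY nmcY]] := (NX, NY).
have uS := union_of_atoms_pointwise memS (nmi_cut_atoms NX) (nmi_cut_atoms NY).
have nmcS : nmc w k 1 5 S.
  apply: (@nmc_weaken _ _ _ (2 * 1) 40) => //.
  case: combS => [|[|[|]]] ->.
  - exact: (nmc_meet cut_ge_k crXY nmcX nmcY).
  - exact: (nmc_join cut_ge_k crXY nmcX nmcY).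
  - exact: (nmc_diff w_sym cut_ge_k crXY nmcX nmcY).
  - by rewrite crossesC in crXY; exact: (nmc_diff w_sym cut_ge_k crXY nmcY nmcX).
split; first split=> //.
  apply/setP => i; have [x xi] := outside_atom_witness a_atom i.
  by rewrite (mem_outside_in a_atom uS xi) memS (mem_nmi_cut NX xi) (mem_nmi_cut NY xi) inE.
right; exists X, Y; split=> //; last by rewrite nmcX nmcY.
  by exists a1, a2.
by exists b1, b2.
Qed.

Lemma special_intervalI X Y a1 a2 b1 b2 l r :
  nmi_cut X a1 a2 -> nmi_cut Y b1 b2 -> crosses X Y -> valid_lr n l r ->
  (forall i, (l <= i < r) = (a1 <= i < a2) && (b1 <= i < b2)) -> special l r.
Proof.
move=> NX NY crXY; apply: (special_interval_combination (S := X :&: Y) NX NY crXY).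
  by left.
by move=> x; rewrite inE.
Qed.

Lemma special_intervalU X Y a1 a2 b1 b2 l r :
  nmi_cut X a1 a2 -> nmi_cut Y b1 b2 -> crosses X Y -> valid_lr n l r ->
  (forall i, (l <= i < r) = (a1 <= i < a2) || (b1 <= i < b2)) -> special l r.
Proof.
move=> NX NY crXY; apply: (special_interval_combination (S := X :|: Y) NX NY crXY).
  by right; left.
by move=> x; rewrite inE.
Qed.

Lemma special_intervalD X Y a1 a2 b1 b2 l r :
  nmi_cut X a1 a2 -> nmi_cut Y b1 b2 -> crosses X Y -> valid_lr n l r ->
  (forall i, (l <= i < r) = (a1 <= i < a2) && ~~ (b1 <= i < b2)) -> special l r.
Proof.
move=> NX NY crXY.
apply: (special_interval_combination (f := fun p q => p && ~~ q) (S := X :\: Y) NX NY crXY).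
  by right; right; left.
by move=> x; rewrite inE andbC.
Qed.

Section Crossing.
Variables (SB : {set V}) (lA rA lB rB : nat).
Hypothesis SB_nmi : nmi_cut SB lB rB.

(* The conclusion of the theorem when B sticks out of A to the right (resp.
   left), with A :&: B, A :\: B, A :|: B and B :\: A written as intervals. *)
Definition right_conclusion : Prop :=
  (special lB rA \/ special lA lB) /\ (special lA rB \/ special rA rB).

Definition left_conclusion : Prop :=
  (special lA rB \/ special rB rA) /\ (special lB rA \/ special lB lA).

Definition crossing_conclusion : Prop :=
  ([&& 0 < lA, lA < lB, lB < rA, rA < rB & rB <= n] -> right_conclusion) /\
  ([&& 0 < lB, lB < lA, lA < rB, rB < rA & rA <= n] -> left_conclusion).

Section Right.
Hypothesis orient : [&& 0 < lA, lA < lB, lB < rA, rA < rB & rB <= n].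

Lemma right_conclusion_end L l r : nmi_cut L l r -> l <= lA -> r = rA -> right_conclusion.
Proof.
move=> NL l_le r_eq; have := nmi_cut_bounds NL => bL.
have crLB : crosses L SB by apply: (nmi_cut_crosses NL SB_nmi); lia.
have crBL : crosses SB L by rewrite crossesC.
split.
  by left; apply: (special_intervalI NL SB_nmi crLB); interval_lia.
by right; apply: (special_intervalD SB_nmi NL crBL); interval_lia.
Qed.

Lemma right_conclusion_join X Y a2 b1 : nmi_cut X lA a2 -> nmi_cut Y b1 rA ->
  crosses X Y -> lA < b1 <= a2 -> a2 < rA -> right_conclusion.
Proof.
move=> NX NY crXY b1_bd a2_lt.
split.
- case: (ltnP lB a2) => [lB_lt | a2_le].
    have crXB : crosses X SB by apply: (nmi_cut_crosses NX SB_nmi); lia.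
    by right; apply: (special_intervalD NX SB_nmi crXB); interval_lia.
  left; case: (ltnP b1 lB) => [b1_lt | lB_le].
    have crYB : crosses Y SB by apply: (nmi_cut_crosses NY SB_nmi); lia.
    by apply: (special_intervalI NY SB_nmi crYB); interval_lia.
  have -> : lB = b1 by lia.
  exact: special_interval_nmi NY.
- case: (ltnP b1 lB) => [b1_lt | lB_le].
    have crBY : crosses SB Y by apply: (nmi_cut_crosses SB_nmi NY); lia.
    by right; apply: (special_intervalD SB_nmi NY crBY); interval_lia.
  case: (ltnP lB a2) => [lB_lt | a2_le].
    have crXB : crosses X SB by apply: (nmi_cut_crosses NX SB_nmi); lia.
    by left; apply: (special_intervalU NX SB_nmi crXB); interval_lia.
  case sYB: (Y \subset SB).
    have crXB : crosses X SB.
      by apply: (nmi_cut_crosses_through NX SB_nmi crXY sYB); lia.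
    by left; apply: (special_intervalU NX SB_nmi crXB); interval_lia.
  have crBY : crosses SB Y by apply: (nmi_cut_crosses_nested SB_nmi NY); rewrite ?sYB; lia.
  by right; apply: (special_intervalD SB_nmi NY crBY); interval_lia.
Qed.

Lemma right_conclusion_diff X Y a2 b2 : nmi_cut X lA a2 -> nmi_cut Y rA b2 ->
  crosses X Y -> rA < a2 <= b2 -> right_conclusion.
Proof.
move=> NX NY crXY a2_bd; have := nmi_cut_bounds NY => bY.
split.
- case: (ltnP a2 rB) => [a2_lt | rB_le].
    have crXB : crosses X SB by apply: (nmi_cut_crosses NX SB_nmi); lia.
    by right; apply: (special_intervalD NX SB_nmi crXB); interval_lia.
  case: (ltnP rB b2) => [rB_lt | b2_le].
    have crBY : crosses SB Y by apply: (nmi_cut_crosses SB_nmi NY); lia.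
    by left; apply: (special_intervalD SB_nmi NY crBY); interval_lia.
  case sYB: (Y \subset SB).
    have crXB : crosses X SB.
      by apply: (nmi_cut_crosses_through NX SB_nmi crXY sYB); lia.
    by right; apply: (special_intervalD NX SB_nmi crXB); interval_lia.
  have crBY : crosses SB Y by apply: (nmi_cut_crosses_nested SB_nmi NY); rewrite ?sYB; lia.
  by left; apply: (special_intervalD SB_nmi NY crBY); interval_lia.
- case: (ltnP a2 rB) => [a2_lt | rB_le].
    have crXB : crosses X SB by apply: (nmi_cut_crosses NX SB_nmi); lia.
    by left; apply: (special_intervalU NX SB_nmi crXB); interval_lia.
  right; case: (ltnP rB b2) => [rB_lt | b2_le].
    have crBY : crosses SB Y by apply: (nmi_cut_crosses SB_nmi NY); lia.
    by apply: (special_intervalI SB_nmi NY crBY); interval_lia.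
  have -> : rB = b2 by lia.
  exact: special_interval_nmi NY.
Qed.

End Right.

Section Left.
Hypothesis orient : [&& 0 < lB, lB < lA, lA < rB, rB < rA & rA <= n].

Lemma left_conclusion_end L l r : nmi_cut L l r -> l = lA -> rA <= r -> left_conclusion.
Proof.
move=> NL l_eq r_ge; have := nmi_cut_bounds NL => bL.
have crLB : crosses L SB by apply: (nmi_cut_crosses NL SB_nmi); lia.
have crBL : crosses SB L by rewrite crossesC.
split.
  by left; apply: (special_intervalI NL SB_nmi crLB); interval_lia.
by right; apply: (special_intervalD SB_nmi NL crBL); interval_lia.
Qed.

Lemma left_conclusion_join X Y a2 b1 : nmi_cut X lA a2 -> nmi_cut Y b1 rA ->
  crosses X Y -> lA < b1 <= a2 -> a2 < rA -> left_conclusion.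
Proof.
move=> NX NY crXY b1_bd a2_lt; have crYX : crosses Y X by rewrite crossesC.
split.
- case: (ltnP rB a2) => [rB_lt | a2_le].
    have crXB : crosses X SB by apply: (nmi_cut_crosses NX SB_nmi); lia.
    by left; apply: (special_intervalI NX SB_nmi crXB); interval_lia.
  case: (ltnP b1 rB) => [b1_lt | rB_le].
    have crYB : crosses Y SB by apply: (nmi_cut_crosses NY SB_nmi); lia.
    by right; apply: (special_intervalD NY SB_nmi crYB); interval_lia.
  left; have -> : rB = a2 by lia.
  exact: special_interval_nmi NX.
- case: (ltnP rB a2) => [rB_lt | a2_le].
    have crBX : crosses SB X by apply: (nmi_cut_crosses SB_nmi NX); lia.
    by right; apply: (special_intervalD SB_nmi NX crBX); interval_lia.
  case: (ltnP b1 rB) => [b1_lt | rB_le].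
    have crYB : crosses Y SB by apply: (nmi_cut_crosses NY SB_nmi); lia.
    by left; apply: (special_intervalU NY SB_nmi crYB); interval_lia.
  case sXB: (X \subset SB).
    have crYB : crosses Y SB.
      by apply: (nmi_cut_crosses_through NY SB_nmi crYX sXB); lia.
    by left; apply: (special_intervalU NY SB_nmi crYB); interval_lia.
  have crBX : crosses SB X by apply: (nmi_cut_crosses_nested SB_nmi NX); rewrite ?sXB; lia.
  by right; apply: (special_intervalD SB_nmi NX crBX); interval_lia.
Qed.

Lemma left_conclusion_diff X Y a1 b1 : nmi_cut X a1 rA -> nmi_cut Y b1 lA ->
  crosses X Y -> b1 <= a1 < lA -> left_conclusion.
Proof.
move=> NX NY crXY a1_bd; have := nmi_cut_bounds NY => bY.
split.
- case: (ltnP lB a1) => [lB_lt | a1_le].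
    have crXB : crosses X SB by apply: (nmi_cut_crosses NX SB_nmi); lia.
    by right; apply: (special_intervalD NX SB_nmi crXB); interval_lia.
  case: (ltnP b1 lB) => [b1_lt | lB_le].
    have crBY : crosses SB Y by apply: (nmi_cut_crosses SB_nmi NY); lia.
    by left; apply: (special_intervalD SB_nmi NY crBY); interval_lia.
  case sYB: (Y \subset SB).
    have crXB : crosses X SB.
      by apply: (nmi_cut_crosses_through NX SB_nmi crXY sYB); lia.
    by right; apply: (special_intervalD NX SB_nmi crXB); interval_lia.
  have crBY : crosses SB Y by apply: (nmi_cut_crosses_nested SB_nmi NY); rewrite ?sYB; lia.
  by left; apply: (special_intervalD SB_nmi NY crBY); interval_lia.
- case: (ltnP lB a1) => [lB_lt | a1_le].
    have crXB : crosses X SB by apply: (nmi_cut_crosses NX SB_nmi); lia.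
    by left; apply: (special_intervalU NX SB_nmi crXB); interval_lia.
  right; case: (ltnP b1 lB) => [b1_lt | lB_le].
    have crBY : crosses SB Y by apply: (nmi_cut_crosses SB_nmi NY); lia.
    by apply: (special_intervalI SB_nmi NY crBY); interval_lia.
  have -> : lB = b1 by lia.
  exact: special_interval_nmi NY.
Qed.

End Left.

Hypothesis A_valid : valid_lr n lA rA.

Lemma crossing_conclusion_nmi L : nmi_cut L lA rA -> crossing_conclusion.
Proof.
move=> NL; split=> orient.
  exact: (right_conclusion_end orient NL (leqnn lA) erefl).
exact: (left_conclusion_end orient NL erefl (leqnn rA)).
Qed.

Lemma crossing_conclusion_meet X Y a1 a2 b1 b2 : nmi_cut X a1 a2 -> nmi_cut Y b1 b2 ->
  outside_in a (X :&: Y) = interval n lA rA -> crossing_conclusion.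
Proof.
move=> NX NY OA.
have E m : m < n -> (a1 <= m < a2) && (b1 <= m < b2) = (lA <= m < rA).
  by apply: (outside_in_pointwise NX NY _ OA) => x; rewrite inE.
have := nmi_cut_bounds NX; have := nmi_cut_bounds NY; move: A_valid.
rewrite /valid_lr => vA bY bX.
have [a1_le b1_le] : a1 <= lA /\ b1 <= lA by have := E lA; lia.
have [a2_ge b2_ge] : rA <= a2 /\ rA <= b2 by have := E (rA - 1); lia.
have end_l : a1 = lA \/ b1 = lA by have := E (lA - 1); lia.
have end_r : a2 = rA \/ b2 = rA by have := E rA; lia.
clear E; split=> orient.
  by case: end_r => ?; [apply: (right_conclusion_end orient NX) |
    apply: (right_conclusion_end orient NY)].
by case: end_l => ?; [apply: (left_conclusion_end orient NX) |
  apply: (left_conclusion_end orient NY)].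
Qed.

Lemma crossing_conclusion_join_lA X Y a2 b1 b2 : nmi_cut X lA a2 -> nmi_cut Y b1 b2 ->
  crosses X Y -> (forall m, m < n -> (lA <= m < a2) || (b1 <= m < b2) = (lA <= m < rA)) ->
  crossing_conclusion.
Proof.
move=> NX NY crXY E.
have := nmi_cut_bounds NX; have := nmi_cut_bounds NY; move: A_valid.
rewrite /valid_lr => vA bY bX.
have a2_le : a2 <= rA by have := E (a2 - 1); lia.
have [a2E | a2_lt] : a2 = rA \/ a2 < rA by lia.
  by apply: (crossing_conclusion_nmi (L := X)); rewrite -a2E.
have b2E : b2 = rA by have := E (rA - 1); have := E rA; lia.
have b1_bd : lA <= b1 <= a2 by have := E b1; have := E a2; lia.
clear E; subst b2; have [b1E | b1_gt] : b1 = lA \/ lA < b1 by lia.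
  by apply: (crossing_conclusion_nmi (L := Y)); rewrite -b1E.
split=> orient.
  by apply: (right_conclusion_join orient NX NY crXY); lia.
by apply: (left_conclusion_join orient NX NY crXY); lia.
Qed.

Lemma crossing_conclusion_join X Y a1 a2 b1 b2 : nmi_cut X a1 a2 -> nmi_cut Y b1 b2 ->
  crosses X Y -> outside_in a (X :|: Y) = interval n lA rA -> crossing_conclusion.
Proof.
move=> NX NY crXY OA.
have E m : m < n -> (a1 <= m < a2) || (b1 <= m < b2) = (lA <= m < rA).
  by apply: (outside_in_pointwise NX NY _ OA) => x; rewrite inE.
have := nmi_cut_bounds NX; have := nmi_cut_bounds NY; move: A_valid.
rewrite /valid_lr => vA bY bX.
have [a1E | b1E] : a1 = lA \/ b1 = lA by have := E lA; have := E a1; have := E b1; lia.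
  by subst a1; apply: (crossing_conclusion_join_lA NX NY crXY E).
subst b1; rewrite crossesC in crXY.
by apply: (crossing_conclusion_join_lA NY NX crXY) => m /E; rewrite orbC.
Qed.

Lemma crossing_conclusion_diff X Y a1 a2 b1 b2 : nmi_cut X a1 a2 -> nmi_cut Y b1 b2 ->
  crosses X Y -> outside_in a (X :\: Y) = interval n lA rA -> crossing_conclusion.
Proof.
move=> NX NY crXY OA.
have E m : m < n -> (a1 <= m < a2) && ~~ (b1 <= m < b2) = (lA <= m < rA).
  apply: (outside_in_pointwise (f := fun p q => p && ~~ q) NX NY _ OA) => x.
  by rewrite inE andbC.
have := nmi_cut_bounds NX; have := nmi_cut_bounds NY; move: A_valid.
rewrite /valid_lr => vA bY bX.
have a1_le : a1 <= lA by have := E lA; lia.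
have rA_le : rA <= a2 by have := E (rA - 1); lia.
have low : a1 < lA -> b1 <= a1 /\ b2 = lA.
  by move=> a1_lt; have := E a1; have := E (lA - 1); have := E lA; lia.
have high : rA < a2 -> b1 = rA /\ a2 <= b2.
  by move=> a2_gt; have := E rA; have := E (a2 - 1); have := E (rA - 1); lia.
have a2_eq : a1 < lA -> a2 = rA.
  by move=> /low lowA; case: (ltnP rA a2) => [/high|]; lia.
clear E.
split=> orient.
  have [a2E | a2_gt] : a2 = rA \/ rA < a2 by lia.
    by apply: (right_conclusion_end orient NX); lia.
  have [a1E b1E] : a1 = lA /\ b1 = rA by case: (high a2_gt); lia.
  by subst a1 b1; apply: (right_conclusion_diff orient NX NY crXY); lia.
have [a1E | a1_lt] : a1 = lA \/ a1 < lA by lia.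
  by apply: (left_conclusion_end orient NX); lia.
have [_ b2E] := low a1_lt; rewrite (a2_eq a1_lt) in NX.
by subst b2; apply: (left_conclusion_diff orient NX NY crXY); lia.
Qed.

Lemma crossing_conclusion_special SA :
  canonical_for w k C a SA lA rA -> special_cut w k C a SA -> crossing_conclusion.
Proof.
move=> canA [nmcA | [X [Y [[a1 [a2 [vX canX]]] [b1 [b2 [vY canY]]]]]]].
  exact: (crossing_conclusion_nmi (L := SA)).
move=> /andP[nmcX nmcY] crXY SAE.
have NX : nmi_cut X a1 a2 by [].
have NY : nmi_cut Y b1 b2 by [].
have [_ _ OA] := canA.
case: SAE => [|[|[|]]] SAE; rewrite SAE in OA.
- exact: (crossing_conclusion_meet NX NY OA).
- exact: (crossing_conclusion_join NX NY crXY OA).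
- exact: (crossing_conclusion_diff NX NY crXY OA).
- by rewrite crossesC in crXY; exact: (crossing_conclusion_diff NY NX crXY OA).
Qed.

End Crossing.

Lemma special_isets_of_conclusion lA rA lB rB :
  valid_lr n lA rA -> valid_lr n lB rB -> crosses (interval n lA rA) (interval n lB rB) ->
  crossing_conclusion lA rA lB rB ->
  (special_iset w k C a (interval n lA rA :&: interval n lB rB) \/
   special_iset w k C a (interval n lA rA :\: interval n lB rB)) /\
  (special_iset w k C a (interval n lA rA :|: interval n lB rB) \/
   special_iset w k C a (interval n lB rB :\: interval n lA rA)).
Proof.
move=> vA vB crAB [right left].
have iset l r : special l r -> special_iset w k C a (interval n l r) by exists l, r.
have /orP[] := crossing_intervals vA vB crAB => orient.
  have [H1 H2] := right orient.
  have -> : interval n lA rA :&: interval n lB rB = interval n lB rA.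
    by apply/setP => i; rewrite !inE; lia.
  have -> : interval n lA rA :\: interval n lB rB = interval n lA lB.
    by apply/setP => i; rewrite !inE; lia.
  have -> : interval n lA rA :|: interval n lB rB = interval n lA rB.
    by apply/setP => i; rewrite !inE; lia.
  have -> : interval n lB rB :\: interval n lA rA = interval n rA rB.
    by apply/setP => i; rewrite !inE; lia.
  by split; [case: H1 | case: H2] => H; [left | right | left | right]; exact: iset.
have [H1 H2] := left orient.
have -> : interval n lA rA :&: interval n lB rB = interval n lA rB.
  by apply/setP => i; rewrite !inE; lia.
have -> : interval n lA rA :\: interval n lB rB = interval n rB rA.
  by apply/setP => i; rewrite !inE; lia.
have -> : interval n lA rA :|: interval n lB rB = interval n lB rA.
  by apply/setP => i; rewrite !inE; lia.
have -> : interval n lB rB :\: interval n lA rA = interval n lB lA.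
  by apply/setP => i; rewrite !inE; lia.
by split; [case: H1 | case: H2] => H; [left | right | left | right]; exact: iset.
Qed.

End Setting.

Theorem mainTheorem3
  (V : finType) (w : V -> V -> nat) (k : nat) (C : {set {set V}})
  (n : nat) (D : {set 'I_n * 'I_n}) (pos : {set V} -> R * R) (a : 'I_n -> {set V})
  (lA rA lB rB : nat) :
  (forall u v, w u v = w v u) ->
  is_min_cut_value w k ->
  is_nmc_component w k 1 40 C ->
  more_than_one_cut C ->
  polygon_rep C D pos a ->
  special_interval w k C a lA rA ->
  NMI w k C a lB rB ->
  crosses (interval n lA rA) (interval n lB rB) ->
  (special_iset w k C a (interval n lA rA :&: interval n lB rB) \/
   special_iset w k C a (interval n lA rA :\: interval n lB rB)) /\
  (special_iset w k C a (interval n lA rA :|: interval n lB rB) \/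
   special_iset w k C a (interval n lB rB :\: interval n lA rA)).
Proof.
move=> w_sym [cut_ge_k _] _ _ [n_ge3 _ _ [a_atom _] _].
move=> [vA [SA [canA specA]]] [vB [SB [canB nmcB]]] crAB.
have n_gt0 : 0 < n by apply: leq_trans n_ge3.
have SB_nmi : nmi_cut w k C a SB lB rB by [].
apply: special_isets_of_conclusion => //.
exact: (crossing_conclusion_special w_sym cut_ge_k a_atom n_gt0 SB_nmi vA canA specA).
Qed.
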